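(* Let $G=(U,V,E)$ be a path-restricted ordered bipartite graph and let $v$ be a vertex of $G$. Then the subgraph of $G$ induced by the vertex set of $T_r(v)$ has exactly $n-1$ edges, where $n$ is the number of vertices spanned by $T_r(v)$.
   Context: An ordered bipartite graph is $G=(U,V,E)$ where $U,V$ are disjoint finite sets, each carrying a strict total order (both written $<$), and $E\subseteq U\times V$. A path is a sequence of edges in which consecutive edges share a vertex. A path visiting the vertices of $U$ in the order $u_1,\dots,u_k$ and those of $V$ in the order $v_1,\dots,v_l$ is a forward path if either $u_1<\dots<u_k$ and $v_1<\dots<v_l$, or $u_1>\dots>u_k$ and $v_1>\dots>v_l$. For $x\le y$ in $U$ write $\langle x,y\rangle=\{u\in U: x\le u\le y\}$, and similarly in $V$. If $u_a<u_b$ are the smallest and largest $U$-vertices and $v_c<v_d$ the smallest and largest $V$-vertices of a forward path $P$, the range of $P$ is $\{\langle u_a,u_b\rangle,\langle v_c,v_d\rangle\}$. A vertex of $P$ is non-terminal if it is adjacent along $P$ to two vertices of $P$. An edge is a back edge to $P$ if either it is $(u_a,v_j)$ with $v_j\in\langle v_c,v_d\rangle$ and $v_j>v'$ for some non-terminal vertex $v'\in V$ of $P$, or it is $(u_i,v_c)$ with $u_i\in\langle u_a,u_b\rangle$ and $u_i>u'$ for some non-terminal vertex $u'\in U$ of $P$. $G$ is a path-restricted ordered bipartite graph (PRBG) if no forward path in $G$ has a back edge in $E$. $T_r(v)$ denotes the subgraph formed by the union of all forward paths starting at $v$ along which the orders of the visited vertices decrease (in both $U$ and $V$); its vertices are said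 to be spanned by $T_r(v)$. *)

From mathcomp Require Import all_boot all_order.
Set Implicit Arguments. Unset Strict Implicit. Unset Printing Implicit Defensive.
Import Order.TTheory.
Local Open Scope order_scope.

Definition is_minl {d} {T : orderType d} (l : seq T) (a : T) : Prop :=
  a \in l /\ {in l, forall b, a <= b}.
Definition is_maxl {d} {T : orderType d} (l : seq T) (a : T) : Prop :=
  a \in l /\ {in l, forall b, b <= a}.

Section OrderedBipartite.
Context {dU dV : Order.disp_t} {U : finOrderType dU} {V : finOrderType dV}.
(* Ordered bipartite graph G = (U, V, E): U, V finite totally ordered,
   disjointness is built in by using the sum type U + V for the vertices. *)
Variable E : U -> V -> bool.

Definition adj : rel (U + V) := fun x y =>
  match x, y with
  | inl u, inr v => E u v
  | inr v, inl u => E u v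
  | _, _ => false
  end.

Definition uverts (s : seq (U + V)) : seq U :=
  pmap (fun x => if x is inl u then Some u else None) s.
Definition vverts (s : seq (U + V)) : seq V :=
  pmap (fun x => if x is inr v then Some v else None) s.

Definition is_path (s : seq (U + V)) : bool :=
  if s is x :: s' then path adj x s' else false.

Definition forward_path (s : seq (U + V)) : bool :=
  is_path s &&
  ((sorted (fun a b : U => a < b) (uverts s) &&
    sorted (fun a b : V => a < b) (vverts s))
   || (sorted (fun a b : U => a > b) (uverts s) &&
       sorted (fun a b : V => a > b) (vverts s))).

Definition nonterminal (s : seq (U + V)) (x : U + V) : Prop :=
  exists2 i, (0 < i < (size s).-1)%N & nth x s i = x.

Definition back_edge (s : seq (U + V)) (u : U) (v : V) : Prop :=
  (exists ua vc vd,
     is_minl (uverts s) ua /\ is_minl (vverts s) vc /\ is_maxl (vverts s) vd /\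
     u = ua /\ vc <= v <= vd /\
     (exists2 v', nonterminal s (inr v') & v' < v))
  \/
  (exists ua ub vc,
     is_minl (uverts s) ua /\ is_maxl (uverts s) ub /\ is_minl (vverts s) vc /\
     v = vc /\ ua <= u <= ub /\
     (exists2 u', nonterminal s (inl u') & u' < u)).

Definition PRBG : Prop :=
  forall s, forward_path s -> forall u v, E u v -> ~ back_edge s u v.

Definition dec_path_from (x : U + V) (s : seq (U + V)) : bool :=
  [&& is_path s, head x s == x,
      sorted (fun a b : U => a > b) (uverts s) &
      sorted (fun a b : V => a > b) (vverts s)].

Definition Tr_spanned (x y : U + V) : Prop :=
  exists2 s, dec_path_from x s & y \in s.

Definition induced_edges (S : {set U + V}) : {set U * V} :=
  [set e : U * V | [&& E e.1 e.2, (inl e.1 : U + V) \in S & (inr e.2 : U + V) \in S]].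

End OrderedBipartite.

From mathcomp Require Import all_boot all_order.
Set Implicit Arguments. Unset Strict Implicit. Unset Printing Implicit Defensive.
Import Order.TTheory.
Local Open Scope order_scope.

(* For y <> v spanned by T_r(v), call p a parent of y if p precedes y on a
   decreasing path from v. In a PRBG a parent of y is the largest neighbour of
   y in T_r(v): a larger neighbour z would, on the reversed (forward) path,
   possibly prolonged by the neighbour of v lying above z, form a back edge.
   Hence every y <> v has a unique parent, and each induced edge is {y, parent
   of y} for exactly one endpoint y <> v: for at least one, by prolonging a
   path to the other endpoint; for at most one, since a decreasing path cannot
   visit a vertex twice. Counting edges by this endpoint gives |S| - 1. *)

Lemma is_minl_head {d} {T : orderType d} (l : seq T) a :
  sorted <%O l -> a \in l -> is_minl l (head a l).
Proof.
case: l => // x l Hs _; split=> [|b]; first exact: mem_head.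
rewrite inE => /predU1P [-> //|Hb].
have ltT : transitive (<%O : rel T) by exact: lt_trans.
by move: Hs; rewrite /= path_sortedE // => /andP [/allP/(_ b Hb)/ltW].
Qed.

Lemma exists_maxl {d} {T : orderType d} (l : seq T) :
  l != [::] -> exists M, is_maxl l M.
Proof.
elim: l => // x l IH _; case: (eqVneq l [::]) => [-> | /IH [M [HM Hmax]]].
  by exists x; split=> [|b]; rewrite ?inE // => /eqP ->.
have [xM|Mx] := leP x M.
  by exists M; split=> [|b]; rewrite !inE ?HM ?orbT // => /predU1P [->|/Hmax].
exists x; split=> [|b]; first exact: mem_head.
by rewrite inE => /predU1P [->|/Hmax/le_trans/(_ (ltW Mx))].
Qed.

Section Sides.
Context {dU dV : Order.disp_t} {U : finOrderType dU} {V : finOrderType dV}.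
Implicit Types (x y z : U + V) (s t : seq (U + V)).

Definition side x : bool := if x is inl _ then true else false.

Definition leS x y : bool :=
  match x, y with
  | inl a, inl b => a <= b
  | inr a, inr b => a <= b
  | _, _ => false
  end.

Lemma leS_refl : reflexive leS.
Proof. by case=> /=. Qed.

Lemma leS_trans y x z : leS x y -> leS y z -> leS x z.
Proof. by case: x y z => a [] b [] c //=; exact: le_trans. Qed.

Lemma leS_anti x y : leS x y -> leS y x -> x = y.
Proof. by case: x y => a [] b //= H1 H2; rewrite (@le_anti _ _ a b) ?H1. Qed.

Lemma leS_total x y : side x = side y -> leS x y || leS y x.
Proof. by case: x y => a [] b //= _; exact: le_total. Qed.

(* Vertices on different sides are incomparable, so [~~ leS x y] only
   constrains pairs on the same side. *)
Definition dec_seq s : bool := pairwise (fun x y => ~~ leS x y) s.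

Lemma dec_seq_uniq s : dec_seq s -> uniq s.
Proof. by apply: pairwise_uniq => x; rewrite leS_refl. Qed.

Lemma uverts_cat s t : uverts (s ++ t) = uverts s ++ uverts t.
Proof. exact: pmap_cat. Qed.

Lemma vverts_cat s t : vverts (s ++ t) = vverts s ++ vverts t.
Proof. exact: pmap_cat. Qed.

Lemma uverts_rev s : uverts (rev s) = rev (uverts s).
Proof.
elim: s => // x s IH; rewrite rev_cons -cats1 uverts_cat IH.
by case: x => a; rewrite /= ?cats0 // rev_cons cats1.
Qed.

Lemma vverts_rev s : vverts (rev s) = rev (vverts s).
Proof.
elim: s => // x s IH; rewrite rev_cons -cats1 vverts_cat IH.
by case: x => a; rewrite /= ?cats0 // rev_cons cats1.
Qed.

Lemma mem_vverts s (b : V) : (b \in vverts s) = (inr b \in s).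
Proof. by elim: s => // -[a|a] s IH; rewrite /= !inE IH. Qed.

Lemma mem_uverts s (a : U) : (a \in uverts s) = (inl a \in s).
Proof. by elim: s => // -[b|b] s IH; rewrite /= !inE IH. Qed.

Lemma dec_seqE s :
  dec_seq s = sorted >%O (uverts s) && sorted >%O (vverts s).
Proof.
have gtU : transitive (>%O : rel U) by move=> ? ? ? /[swap]; exact: lt_trans.
have gtV : transitive (>%O : rel V) by move=> ? ? ? /[swap]; exact: lt_trans.
rewrite /dec_seq; elim: s => // -[a|a] s IH; rewrite pairwise_cons IH /=.
- rewrite path_sortedE // /uverts all_pmap andbA; congr (_ && _ && _).
  by apply: eq_all; case=> b //=; rewrite ltNge.
- rewrite [X in _ = _ && X]path_sortedE // /vverts all_pmap andbCA.
  by congr [&& _, _ & _]; apply: eq_all; case=> b //=; rewrite ltNge.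
Qed.

Lemma dec_seq_head_le x s z :
  dec_seq (x :: s) -> z \in x :: s -> side z = side x -> leS z x.
Proof.
rewrite /dec_seq pairwise_cons inE => /andP [/allP Hx _] /predU1P [-> _|Hz Hside].
  exact: leS_refl.
by have /orP [|/(negP (Hx z Hz))] := leS_total Hside.
Qed.

End Sides.

Section Paths.
Context {dU dV : Order.disp_t} {U : finOrderType dU} {V : finOrderType dV}.
Variable E : U -> V -> bool.
Implicit Types (x y z : U + V) (s t : seq (U + V)).

Lemma adjC x y : adj E x y = adj E y x.
Proof. by case: x y => ? []. Qed.

Lemma adj_side x y : adj E x y -> side x != side y.
Proof. by case: x y => ? []. Qed.

Lemma is_path_rev s : is_path E s -> is_path E (rev s).
Proof.
case: s => // x p /= Hp; rewrite lastI rev_rcons /= rev_path.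
by rewrite (eq_path (e' := adj E)) // => a b; rewrite adjC.
Qed.

Lemma is_path_last2 s x y : is_path E (s ++ [:: x; y]) -> adj E x y.
Proof. by case: s => [/andP [] | a s] //=; rewrite cat_path => /and3P [_ _] /andP []. Qed.

Lemma dec_path_fromE x s :
  dec_path_from E x s = [&& is_path E s, head x s == x & dec_seq s].
Proof. by rewrite /dec_path_from dec_seqE. Qed.

Lemma dec_path_from_prefix x s t :
  dec_path_from E x (s ++ t) -> s != [::] -> dec_path_from E x s.
Proof.
rewrite !dec_path_fromE /dec_seq pairwise_cat; case: s => // a s.
by rewrite /= cat_path => /and3P [/andP [-> _] -> /andP [_ /andP [->]]].
Qed.

Lemma dec_path_from_rcons x s a :
  dec_path_from E x s -> adj E (last a s) a -> all (fun c => ~~ leS c a) s ->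
  dec_path_from E x (rcons s a).
Proof.
case: s => // w s; rewrite !dec_path_fromE /dec_seq pairwise_rcons /= rcons_path.
by case/and3P => -> -> -> -> ->.
Qed.

Lemma forward_path_rev s : is_path E s -> dec_seq s -> forward_path E (rev s).
Proof.
move=> Hp; rewrite /forward_path is_path_rev // dec_seqE uverts_rev vverts_rev.
by rewrite !rev_sorted => ->.
Qed.

Lemma adj_leS x y : adj E x y -> leS x y = false.
Proof. by case: x y => ? []. Qed.

Lemma adj_nbrs_side x y z : adj E x y -> adj E x z -> side y = side z.
Proof. by case: x y z => ? [] ? []. Qed.

Lemma nonterminal_second x y s : s != [::] -> nonterminal (x :: y :: s) y.
Proof. by case: s => // a s _; exists 1%N. Qed.

Hypothesis HG : PRBG E.

(* Reversed, the path becomes a forward path starting at [y, p]; a neighbour [z]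
   of [y] strictly above the non-terminal [p] yet within its range would be a
   back edge. *)
Lemma penultimate_max t p y z m :
  t != [::] -> is_path E (t ++ [:: p; y]) -> dec_seq (t ++ [:: p; y]) ->
  adj E y z -> m \in t ++ [:: p; y] -> leS z m -> leS z p.
Proof.
move=> t0 HP HdP Hyz Hm Hzm; apply: contraT => Hzp.
have Hpy := is_path_last2 HP.
have Hrev : rev (t ++ [:: p; y]) = y :: p :: rev t by rewrite rev_cat.
have := forward_path_rev HP HdP; rewrite Hrev => Hfw.
have Hnt : nonterminal (y :: p :: rev t) p.
  by apply: nonterminal_second; rewrite -size_eq0 size_rev size_eq0.
have /andP [] :
    sorted <%O (uverts (y :: p :: rev t)) && sorted <%O (vverts (y :: p :: rev t)).
  by move: HdP; rewrite -Hrev dec_seqE uverts_rev vverts_rev !rev_sorted.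
move: Hm; rewrite -mem_rev Hrev.
move: Hnt Hfw Hpy Hyz Hzm Hzp; clear HP HdP Hrev t0.
case: y p z m => [u|w] [pu|pv] [zu|zv] [mu|mv] //=.
- move=> Hnt Hfw _ Ez Hzm Hzp Hm Hu Hv; rewrite -ltNge in Hzp.
  set s := [:: inl u, inr pv & rev t] in Hnt Hfw Hm.
  have [vd [Hvd Hmax]] : exists vd, is_maxl (vverts s) vd by exact: exists_maxl.
  elim: (HG Hfw Ez); left; exists u, pv, vd.
  split; first by apply: (is_minl_head (l := uverts s)) => //; exact: mem_head.
  split; first by apply: (is_minl_head (l := vverts s)) => //; exact: mem_head.
  split; first by split.
  split=> //; split; last by exists pv.
  by rewrite (ltW Hzp) (le_trans Hzm) // Hmax // mem_vverts.
- move=> Hnt Hfw _ Ez Hzm Hzp Hm Hu Hv; rewrite -ltNge in Hzp.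
  set s := [:: inr w, inl pu & rev t] in Hnt Hfw Hm.
  have [ub [Hub Hmax]] : exists ub, is_maxl (uverts s) ub by exact: exists_maxl.
  elim: (HG Hfw Ez); right; exists pu, ub, w.
  split; first by apply: (is_minl_head (l := uverts s)) => //; exact: mem_head.
  split; first by split.
  split; first by apply: (is_minl_head (l := vverts s)) => //; exact: mem_head.
  split=> //; split; last by exists pu.
  by rewrite (ltW Hzp) (le_trans Hzm) // Hmax // mem_uverts.
Qed.

End Paths.

Section Spanned.
Context {dU dV : Order.disp_t} {U : finOrderType dU} {V : finOrderType dV}.
Variable E : U -> V -> bool.
Variable v : U + V.
Implicit Types (x y z p : U + V) (s t : seq (U + V)).

Lemma dec_path_from_head s : dec_path_from E v s -> exists s', s = v :: s'.
Proof.
by case: s => // a s; rewrite dec_path_fromE => /and3P [_ /= /eqP -> _]; exists s.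
Qed.

Lemma spanned_head_le z : Tr_spanned E v z -> side z = side v -> leS z v.
Proof.
case=> s Hs Hz; have [s' Es] := dec_path_from_head Hs.
by move: Hs Hz; rewrite Es dec_path_fromE => /and3P [_ _ Hd]; exact: dec_seq_head_le.
Qed.

Lemma spanned_second z : Tr_spanned E v z -> side z != side v ->
  exists2 w, adj E v w & leS z w.
Proof.
case=> s Hs Hz Hside; have [[|w s'] Es] := dec_path_from_head Hs.
  by move: Hz Hside; rewrite Es inE => /eqP ->; rewrite eqxx.
move: Hs Hz Hside; rewrite Es dec_path_fromE /dec_seq pairwise_cons.
case/and3P => /= /andP [Hvw _] _ /andP [_ Hd].
rewrite inE => /predU1P [-> | Hz]; first by rewrite eqxx.
move=> Hside; exists w => //; apply: dec_seq_head_le Hz _ => //.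
by apply/eqP; move: Hside (adj_side Hvw); do 3!case: side.
Qed.

Definition parent_of y p : Prop := exists t, dec_path_from E v (t ++ [:: p; y]).

Lemma parent_adj y p : parent_of y p -> adj E y p.
Proof. by case=> t; rewrite dec_path_fromE adjC => /and3P [/is_path_last2]. Qed.

Lemma parent_spanned y p : parent_of y p -> Tr_spanned E v p.
Proof. by case=> t Ht; exists (t ++ [:: p; y]) => //; rewrite mem_cat !inE eqxx orbT. Qed.

Lemma exists_parent y : Tr_spanned E v y -> y != v -> exists p, parent_of y p.
Proof.
case=> s Hs Hy yv; set i := index y s.
have Hpre : dec_path_from E v (rcons (take i s) y).
  apply: (dec_path_from_prefix (t := drop i.+1 s)); last by rewrite -size_eq0 size_rcons.
  by rewrite -[X in rcons _ X](nth_index y Hy) -take_nth ?index_mem // cat_take_drop.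
move: Hpre; case/lastP: (take i s) => [|t p] Hpre.
  by have [? [Ey _]] := dec_path_from_head Hpre; rewrite Ey eqxx in yv.
by exists p, t; move: Hpre; rewrite -!cats1 -catA.
Qed.

Lemma root_parent b : adj E v b -> parent_of b v.
Proof.
move=> Hvb; exists [::]; rewrite dec_path_fromE /= Hvb eqxx /dec_seq /=.
by rewrite (adj_leS Hvb).
Qed.

Lemma parent_extend b q a :
  parent_of b q -> adj E b a -> leS a q -> a != q -> parent_of a b.
Proof.
case=> t Ht Hba Haq aq; exists (rcons t q).
have -> : rcons t q ++ [:: b; a] = rcons (t ++ [:: q; b]) a.
  by rewrite -!cats1 -!catA.
have Htq : all (fun c => ~~ leS c q) t.
  move: (Ht); rewrite dec_path_fromE /dec_seq pairwise_cat allrel_consr.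
  by case/and4P => _ _ /andP [].
apply: dec_path_from_rcons Ht _ _; first by rewrite last_cat.
rewrite all_cat /= (adj_leS Hba) /= andbT; apply/andP; split.
  by apply: sub_all Htq => c; apply: contra => /leS_trans; apply.
by apply: contra aq => Hqa; rewrite (leS_anti Haq Hqa).
Qed.

Hypothesis HG : PRBG E.

Lemma parent_max y p z : parent_of y p -> Tr_spanned E v z -> adj E y z -> leS z p.
Proof.
move=> Hyp Hz Hyz; have side_zp := adj_nbrs_side Hyz (parent_adj Hyp).
case: Hyp => -[|a t]; rewrite dec_path_fromE => /and3P [HP Ea HdP]; move/eqP: Ea => /= Ea.
  by rewrite Ea; apply: spanned_head_le; rewrite // side_zp Ea.
have t0 : a :: t != [::] by [].
have Hv : v \in (a :: t) ++ [:: p; y] by rewrite Ea mem_head.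
have [Evp | Nvp] := eqVneq (side v) (side p).
  apply: (penultimate_max HG t0 HP HdP Hyz Hv).
  by apply: spanned_head_le Hz _; rewrite side_zp.
have [w Hvw Hzw] : exists2 w, adj E v w & leS z w.
  by apply: spanned_second Hz _; rewrite side_zp eq_sym.
have [/hasP [m Hm Hwm] | /hasPn Hw] := boolP (has (leS w) ((a :: t) ++ [:: p; y])).
  exact: (penultimate_max HG t0 HP HdP Hyz Hm (leS_trans Hzw Hwm)).
apply: (penultimate_max HG (t := w :: a :: t) _ _ _ Hyz (mem_head w _) Hzw) => //.
  by move: HP; rewrite /= Ea adjC Hvw.
by rewrite /dec_seq (cat_cons w) pairwise_cons -/(dec_seq _) HdP andbT; apply/allP.
Qed.

End Spanned.

Section Counting.
Context {dU dV : Order.disp_t} {U : finOrderType dU} {V : finOrderType dV}.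
Variable E : U -> V -> bool.
Hypothesis HG : PRBG E.
Variable v : U + V.
Variable S : {set U + V}.
Hypothesis HS : forall y, y \in S <-> Tr_spanned E v y.
Implicit Types (x y z p : U + V).

Definition max_nbr y p : bool :=
  [&& p \in S, adj E y p & [forall z, (z \in S) && adj E y z ==> leS z p]].

Lemma root_spanned : v \in S.
Proof. by apply/HS; exists [:: v]; rewrite ?mem_head // dec_path_fromE /= eqxx. Qed.

Lemma parent_max_nbr y p : parent_of E v y p -> max_nbr y p.
Proof.
move=> Hyp; apply/and3P; split; [exact/HS/(parent_spanned Hyp) | exact: parent_adj Hyp |].
apply/forallP => z; apply/implyP => /andP [/HS Hz Hyz].
exact: (parent_max HG Hyp Hz Hyz).
Qed.

Lemma max_nbr_uniq y p q : max_nbr y p -> max_nbr y q -> p = q.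
Proof.
case/and3P => pS Hyp /forallP Hp; case/and3P => qS Hyq /forallP Hq.
apply: leS_anti; [apply: (implyP (Hq p)) | apply: (implyP (Hp q))]; exact/andP.
Qed.

Lemma edge_max_nbr a b : a \in S -> b \in S -> adj E a b ->
  (a != v) && max_nbr a b || (b != v) && max_nbr b a.
Proof.
move=> aS bS Hab; have [Ea | av] := eqVneq a v.
  rewrite Ea /= in Hab *; rewrite (parent_max_nbr (root_parent Hab)) andbT.
  by apply: contraTneq Hab => ->; case: (v).
have [Eb | bv] := eqVneq b v.
  by rewrite Eb adjC in Hab *; rewrite orbF; apply/parent_max_nbr/root_parent.
have [q Hbq] := exists_parent ((HS b).1 bS) bv.
have [Eq | aq] := eqVneq a q; first by rewrite Eq (parent_max_nbr Hbq) orbT.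
rewrite (parent_max_nbr (parent_extend Hbq _ _ aq)) //; first by rewrite adjC.
case/and3P: (parent_max_nbr Hbq) => _ _ /forallP /(_ a) /implyP.
by apply; rewrite aS adjC.
Qed.

Lemma max_nbr_asym a b : a != v -> b != v -> max_nbr a b -> max_nbr b a -> False.
Proof.
move=> av bv Hab Hba; have aS : a \in S by case/and3P: Hba.
have [p Hap] := exists_parent ((HS a).1 aS) av.
have Epb := max_nbr_uniq (parent_max_nbr Hap) Hab; subst p.
case: Hap => t; case/lastP: t => [|t c] Ht.
  by have [? [Eb _]] := dec_path_from_head Ht; rewrite Eb eqxx in bv.
have Hbc : parent_of E v b c.
  exists t; apply: (dec_path_from_prefix (t := [:: a])); last by case: t {Ht}.
  by move: Ht; rewrite -cats1 -!catA.
have Eca := max_nbr_uniq (parent_max_nbr Hbc) Hba; subst c.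
move: Ht; rewrite dec_path_fromE => /and3P [_ _ /dec_seq_uniq].
by rewrite -cats1 -catA cat_uniq /= !inE eqxx orbT !andbF.
Qed.

Definition child (e : U * V) : U + V :=
  if (inl e.1 != v) && max_nbr (inl e.1) (inr e.2) then inl e.1 else inr e.2.

Lemma child_spec e : e \in induced_edges E S ->
  [/\ child e = inl e.1, inl e.1 != v & max_nbr (inl e.1) (inr e.2)] \/
  [/\ child e = inr e.2, inr e.2 != v & max_nbr (inr e.2) (inl e.1)].
Proof.
rewrite inE /child => /and3P [Ee uS wS]; case: ifP => [/andP [] | Hu]; first by left.
by move: (edge_max_nbr uS wS Ee); rewrite Hu /= => /andP [wv Mw]; right.
Qed.

Lemma child_inj : {in induced_edges E S &, injective child}.
Proof.
move=> [u1 w1] [u2 w2] /child_spec H1 /child_spec H2.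
case: H1 H2 => [[-> _ M1] | [-> _ M1]] [[-> _ M2] | [-> _ M2]] //= [E12].
- by rewrite -E12 in M2 *; case: (max_nbr_uniq M1 M2) => ->.
- by rewrite -E12 in M2 *; case: (max_nbr_uniq M1 M2) => ->.
Qed.

Lemma child_image : child @: induced_edges E S = S :\ v.
Proof.
apply/setP => y; rewrite !inE; apply/imsetP/andP => [[e He ->] | [yv yS]].
  have := He; rewrite inE => /and3P [_ uS wS].
  by case: (child_spec He) => -[-> ->].
have [p Hyp] := exists_parent ((HS y).1 yS) yv.
have Mp := parent_max_nbr Hyp; have pS : p \in S by case/and3P: Mp.
move: (parent_adj Hyp); clear Hyp.
case: y p yv yS Mp pS => y [] p // yv yS Mp pS Hyp.
- by exists (y, p); [rewrite inE; apply/and3P | rewrite /child /= yv Mp].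
- exists (p, y); first by rewrite inE; apply/and3P.
  rewrite /child /=; case: ifP => // /andP [pv Mpy].
  by case: (max_nbr_asym pv yv Mpy Mp).
Qed.

End Counting.

Theorem lemma5 (dU dV : Order.disp_t) (U : finOrderType dU) (V : finOrderType dV)
  (E : U -> V -> bool) (HG : PRBG E) (v : U + V) (S : {set U + V})
  (HS : forall y, y \in S <-> Tr_spanned E v y) :
  #|induced_edges E S| = (#|S| - 1)%N.
Proof.
rewrite -(card_in_imset (child_inj HG HS)) (child_image HG HS).
by rewrite (cardsD1 v S) (root_spanned HS) add1n subn1.
Qed.
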